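(* Let $\mathcal{N}$ be a closed chemical reaction network, $\{\omega^1,\dots,\omega^d\}$ a reduced basis of $\Gamma^\perp$, $\widetilde f_\kappa$ the associated extended rate function, and $\kappa^o$, $g_{\kappa^o}$ as in the context. Then for each $c$, the determinant $\det(J_c(\widetilde f_\kappa))$, viewed as a polynomial in the rate constants $(k_{y\to y'})_{y\to y'\in\mathcal{R}}$, coincides with the sum of the terms of total degree $s$ (in these rate constants) in the expansion of $(-1)^d\det(J_c(g_{\kappa^o}))$.
   Context: A chemical reaction network $\mathcal{N}=(\mathcal{S},\mathcal{C},\mathcal{R})$ consists of a finite set of species $\mathcal{S}=\{S_1,\dots,S_n\}$, a finite set of complexes $\mathcal{C}\subset\mathbb{Z}_{\ge 0}^n$ (species $S_i$ identified with the $i$-th standard basis vector; the zero complex allowed), and a finite set of reactions $\mathcal{R}\subset\mathcal{C}\times\mathcal{C}$, written $y\to y'$, with $y\ne y'$. A rate vector is $\kappa=(k_{y\to y'})\in\mathbb{R}_+^{\mathcal{R}}$ ($\mathbb{R}_+$ the positive reals); the mass-action species formation rate function is $f_\kappa(c)=\sum_{y\to y'\in\mathcal{R}}k_{y\to y'}c^y(y'-y)$, $c^y=\prod_i c_i^{y_i}$, components $f_{\kappa,i}$. The stoichiometric subspace is $\Gamma=\mathrm{span}\{y'-y:y\to y'\in\mathcal{R}\}$, $s=\dim\Gamma$, $d=n-s$; closed means $\Gamma\ne\mathbb{R}^n$. A basis $\{\omega^1,\dots,\omega^d\}$ of $\Gamma^\perp$ with $\omega^i=(\lambda^i_1,\dots,\lambda^i_n)$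 is reduced if $\lambda^i_i=1$ and $\lambda^i_j=0$ for $j\in\{1,\dots,d\}$, $j\ne i$ (species assumed ordered so one exists). The extended rate function is $\widetilde f_\kappa(c)=(\omega^1\cdot c,\dots,\omega^d\cdot c,f_{\kappa,d+1}(c),\dots,f_{\kappa,n}(c))$; $J_c$ denotes the Jacobian at $c$. Let $\mathcal{O}(\mathcal{N})=\{i:S_i\to 0\notin\mathcal{R}\}$ and $\mathcal{N}^o$ the fully open network with reactions $\mathcal{R}\cup\{S_i\to 0:i=1,\dots,n\}$. The rate vector $\kappa^o$ of $\mathcal{N}^o$ agrees with $\kappa$ on $\mathcal{R}$ and has $k_{S_i\to 0}=1$ for $i\in\mathcal{O}(\mathcal{N})$; $g_{\kappa^o}(c)=f_\kappa(c)-(\delta_1c_1,\dots,\delta_nc_n)$ is the species formation rate function of $\mathcal{N}^o$ with rate vector $\kappa^o$, where $\delta_i=1$ if $i\in\mathcal{O}(\mathcal{N})$ and $0$ otherwise. *)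

From HB Require Import structures.
From mathcomp Require Import all_boot all_order all_algebra.
From mathcomp Require Export mpoly.
Set Implicit Arguments. Unset Strict Implicit. Unset Printing Implicit Defensive.
Import Order.TTheory GRing.Theory Num.Theory.
Local Open Scope ring_scope.

(* A reaction network with species S_0..S_(n-1) (type 'I_n) and reactions
   indexed by 'I_m; reaction r is  src r -> tgt r  (complexes are monomials
   'X_{1..n}, i.e. vectors in Z_{>=0}^n).  Rate constants k_r are treated as
   formal variables: the coefficient ring of all rate-function polynomials is
   {mpoly R[m]} (polynomials in the rate constants), and the concentration
   variables c_0..c_(n-1) are the variables of {mpoly {mpoly R[m]}[n]}. *)

Section CRN.
Variables (R : fieldType) (n m : nat) (src tgt : 'I_m -> 'X_{1..n}).

Local Notation K := {mpoly R[m]}.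

(* matrix whose rows are the reaction vectors y' - y; its row space is Gamma *)
Definition stoich_mx : 'M[R]_(m, n) :=
  \matrix_(r < m, i < n) ((tgt r i)%:R - (src r i)%:R).

Definition frate (i : 'I_n) : {mpoly K[n]} :=
  \sum_(r < m) (((tgt r i)%:R - (src r i)%:R : R) *: ('X_r : K)) *: 'X_[src r].

Definition in_open (i : 'I_n) : bool :=
  ~~ [exists r : 'I_m, (src r == U_(i)%MM) && (tgt r == 0%MM)].

Definition grate (i : 'I_n) : {mpoly K[n]} :=
  frate i - ((in_open i)%:R : K) *: 'X_i.

Definition omega_lin (d : nat) (W : 'M[R]_(d, n)) (k : 'I_d) : {mpoly K[n]} :=
  \sum_(j < n) (((W k j)%:MP : K) *: 'X_j).

Definition ext_rate (d : nat) (W : 'M[R]_(d, n)) (i : 'I_n) : {mpoly K[n]} :=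
  match (insub (val i) : option 'I_d) with
  | Some k => omega_lin W k
  | None => frate i
  end.

Definition jac (F : 'I_n -> {mpoly K[n]}) (c : 'I_n -> R) : 'M[K]_n :=
  \matrix_(i < n, j < n) (mderiv j (F i)).@[fun k => ((c k)%:MP : K)].

End CRN.

Definition deg_part (R : ringType) (m s : nat) (p : {mpoly R[m]}) : {mpoly R[m]} :=
  @pihomog m R mdeg s p.

From HB Require Import structures.
From mathcomp Require Import all_boot all_order all_algebra.
From mathcomp Require Import mpoly.
From mathcomp Require Import perm zify ring.
Set Implicit Arguments. Unset Strict Implicit. Unset Printing Implicit Defensive.
Import GRing.Theory Num.Theory.
Local Open Scope ring_scope.

(* Multiplying J(g) on the left by the matrix Q whose first d rows are the
   reduced basis omega and whose other rows are unit vectors does not change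
   the determinant (Q is unitriangular).  Since omega . f = 0 and omega vanishes
   on every species with an outflow reaction, the first d rows of Q J(g) are
   -omega, while the other rows are those of J(f) shifted by constants.  The
   entries of J(f) are homogeneous of degree 1 in the rate constants, so in
   the Leibniz expansion the part of degree n - d = s only sees J(f) in the
   last n - d rows: it is (-1)^d det J(f~). *)

Section TopDegreePart.
Variables (R : comNzRingType) (m : nat).
Implicit Types (p q : {mpoly R[m]}) (a : R).

Lemma msizeM_leq p q : (msize (p * q) <= (msize p + msize q).-1)%N.
Proof.
rewrite msizeE; apply/bigmax_leqP_seq => mm /msuppM_le /allpairsP.
case=> -[m1 m2] [/= /msize_mdeg_lt lt1 /msize_mdeg_lt lt2 ->] _.
rewrite mdegD; lia.
Qed.

Lemma msize_dhomog d p : p \is d.-homog -> (msize p <= d.+1)%N.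
Proof.
move/dhomog_mf=> homp; rewrite msizeE; apply/bigmax_leqP_seq => mm /homp -> _.
exact: leqnn.
Qed.

Lemma pihomog_msize d p : (msize p <= d)%N -> pihomog mdeg d p = 0.
Proof.
move=> lep; rewrite pihomogE big_seq_cond big1 // => mm.
case/andP=> /msize_mdeg_lt lt /eqP eq.
by move: (leq_trans lt lep); rewrite eq ltnn.
Qed.

Lemma mpolyC_dhomog0 a : (a%:MP : {mpoly R[m]}) \is 0.-homog.
Proof.
apply/dhomogP => mm; rewrite msuppC; case: eqP => //= _.
by rewrite inE => /eqP ->; rewrite mdeg0.
Qed.

Lemma msizeD_leq k p q :
  (msize p <= k)%N -> (msize q <= k)%N -> (msize (p + q) <= k)%N.
Proof.
by move=> lep leq; apply: leq_trans (msizeD_le p q) _; rewrite geq_max lep.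
Qed.

(* The product of the [F i + G i] is the product of the [F i] up to terms of
   total degree [< \sum_i e i], which [pihomog] then discards. *)
Lemma pihomog_prodD (I : finType) (F G : I -> {mpoly R[m]}) (e : I -> nat) :
  (forall i, F i \is (e i).-homog) -> (forall i, (msize (G i) <= e i)%N) ->
  pihomog mdeg (\sum_i e i) (\prod_i (F i + G i)) = \prod_i F i.
Proof.
move=> homF lowG.
have [homP lowP] : \prod_i F i \is (\sum_i e i)%N.-homog /\
    (msize (\prod_i (F i + G i) - \prod_i F i) <= \sum_i e i)%N.
  apply: (big_rec3 (fun D x y => y \is D.-homog /\ (msize (x - y) <= D)%N)).
    by rewrite dhomog1 subrr msize0.
  move=> i D x y _ [homy lowxy]; split; first exact: dhomogM.
  have -> : (F i + G i) * x - F i * y = F i * (x - y) + G i * y + G i * (x - y).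
    by ring.
  have := msizeM_leq (F i) (x - y); have := msize_dhomog (homF i).
  have := msizeM_leq (G i) y; have := msize_dhomog homy.
  have := msizeM_leq (G i) (x - y); have := lowG i.
  move=> *; rewrite !msizeD_leq //; lia.
rewrite -(subrK (\prod_i F i) (\prod_i _)) pihomogD.
by rewrite pihomog_msize // add0r pihomog_dE.
Qed.

Lemma pihomog_detD n (A B : 'M[{mpoly R[m]}]_n) (e : 'I_n -> nat) :
  (forall i j, A i j \is (e i).-homog) -> (forall i j, (msize (B i j) <= e i)%N) ->
  pihomog mdeg (\sum_i e i) (\det (A + B)) = \det A.
Proof.
move=> homA lowB; rewrite [LHS]raddf_sum; apply: eq_bigr => s _.
under [in X in _ * X]eq_bigr do rewrite mxE.
by rewrite !mulr_sign; case: (odd_perm s); rewrite ?raddfN /= pihomog_prodD.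
Qed.

End TopDegreePart.

Lemma sum_ord_ltn n d : (\sum_(i < n) (i < d : nat) = minn d n)%N.
Proof.
elim: n => [|n IHn]; first by rewrite big_ord0 minn0.
by rewrite big_ord_recr /= IHn; case: ltnP => ?; lia.
Qed.

Lemma sum_ord_geq n d : (\sum_(i < n) (d <= i : nat) = n - d)%N.
Proof.
elim: n => [|n IHn]; first by rewrite big_ord0.
by rewrite big_ord_recr /= IHn; case: leqP => ?; lia.
Qed.

Section OverlayTop.
Variables (R : comNzRingType) (d n : nat).
Implicit Types (X : 'M[R]_(d, n)) (Y : 'M[R]_n).

(* When [n < d] the rows of [X] of index [>= n] are dropped. *)
Definition overlay_top X Y : 'M[R]_n :=
  \matrix_(i, j) match insub (val i) : option 'I_d with
                 | Some k => X k j
                 | None => Y i j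
                 end.

Lemma overlay_topD X1 X2 Y1 Y2 :
  overlay_top (X1 + X2) (Y1 + Y2) = overlay_top X1 Y1 + overlay_top X2 Y2.
Proof.
by apply/matrixP => i j; rewrite !mxE; case: insubP => [k _ _|_] //; rewrite mxE.
Qed.

Lemma mul_overlay_top1 X Y : overlay_top X 1 *m Y = overlay_top (X *m Y) Y.
Proof.
apply/matrixP => i j; rewrite !mxE; case: insubP => [k _ ik|ge_id].
  by rewrite mxE; apply: eq_bigr => l _; rewrite mxE -ik valK.
transitivity ((1%:M *m Y) i j); last by rewrite mul1mx.
by rewrite mxE; under eq_bigr => l _ do rewrite mxE insubN //.
Qed.

Lemma det_overlay_topN X Y :
  (d <= n)%N -> \det (overlay_top (- X) Y) = (-1) ^+ d * \det (overlay_top X Y).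
Proof.
move=> le_dn.
have -> : overlay_top (- X) Y =
    diag_mx (\row_i (-1) ^+ (i < d : nat)) *m overlay_top X Y.
  apply/matrixP => i j; rewrite mul_diag_mx !mxE.
  by case: insubP => [k lt_id _|/negbTE ->]; rewrite ?lt_id ?mxE ?mulN1r ?mul1r.
rewrite det_mulmx det_diag.
under eq_bigr do rewrite mxE.
by rewrite prodrXr sum_ord_ltn (minn_idPl le_dn).
Qed.

Lemma det_overlay_top1 X :
  (forall (k : 'I_d) (j : 'I_n), (j < d)%N -> X k j = (k == j :> nat)%:R) ->
  \det (overlay_top X 1) = 1.
Proof.
move=> reducedX; rewrite -det_tr det_trig.
  apply: big1 => i _; rewrite !mxE; case: insubP => [k lt_id ki|_].
    by rewrite reducedX // ki eqxx.
  by rewrite eqxx.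
apply/is_trig_mxP => i j lt_ij; rewrite !mxE.
case: insubP => [k lt_jd kj|_]; last by rewrite -val_eqE /= gtn_eqF.
by rewrite reducedX ?(ltn_trans lt_ij) // kj gtn_eqF.
Qed.

End OverlayTop.

Section JacobianStructure.
Variables (R : fieldType) (n m : nat) (src tgt : 'I_m -> 'X_{1..n}) (c : 'I_n -> R).
Local Notation K := {mpoly R[m]}.
Local Notation Sc := (map_mx (@mpolyC m R) (stoich_mx R src tgt)).
Local Notation Jf := (jac (frate R src tgt) c).
Local Notation Jg := (jac (grate R src tgt) c).

Let cK (k : 'I_n) : K := (c k)%:MP.

Definition rate_jac : 'M[K]_(m, n) :=
  \matrix_(r, j) ('X_r * (mderiv j ('X_[src r] : {mpoly K[n]})).@[cK]).

Lemma eval_mderivX (s : 'X_{1..n}) j :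
  (mderiv j ('X_[s] : {mpoly K[n]})).@[cK] =
  ((s j)%:R * \prod_i c i ^+ (s - U_(j))%MM i)%:MP.
Proof.
rewrite mderivX mevalZ mevalX rmorphM rmorph_prod /= rmorph_nat.
by congr (_ * _); apply: eq_bigr => i _; rewrite rmorphXn.
Qed.

Lemma eval_mderivXU i j : (mderiv j ('X_i : {mpoly K[n]})).@[cK] = (i == j)%:R.
Proof.
rewrite mderivX mnm1E mevalZ; case: eqVneq => [<-|_]; last by rewrite mul0r.
have -> : (U_(i) - U_(i) = 0)%MM by apply/mnmP => k; rewrite mnmBE subnn mnm0E.
by rewrite mpolyX0 meval1 mulr1.
Qed.

Lemma jac_frate : Jf = Sc^T *m rate_jac.
Proof.
apply/matrixP => i j; rewrite !mxE /frate (raddf_sum (mderiv j)) raddf_sum.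
by apply: eq_bigr => r _; rewrite /= mderivZ mevalZ !mxE -mul_mpolyC mulrA.
Qed.

Lemma jac_frate_dhomog1 i j : Jf i j \is 1.-homog.
Proof.
rewrite jac_frate mxE; apply: rpred_sum => r _; rewrite !mxE eval_mderivX.
rewrite -[1%N]add0n; apply: dhomogM; first exact: mpolyC_dhomog0.
rewrite -[1%N]addn0; apply: dhomogM; last exact: mpolyC_dhomog0.
by rewrite dhomogX; apply/mdeg1P; exists r.
Qed.

Lemma jac_grate : Jg = Jf - diag_mx (\row_i (in_open src tgt i)%:R).
Proof.
apply/matrixP => i j; rewrite !mxE /grate mderivB mevalB mderivZ mevalZ.
by rewrite eval_mderivXU mulr_natr.
Qed.

Lemma jac_ext_rate d (W : 'M[R]_(d, n)) :
  jac (ext_rate src tgt W) c = overlay_top (map_mx (@mpolyC m R) W) Jf.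
Proof.
apply/matrixP => i j; rewrite !mxE /ext_rate; case: insubP => [k _ _|_] //.
transitivity ((map_mx (@mpolyC m R) W *m 1%:M) k j); last by rewrite mulmx1 mxE.
rewrite /omega_lin (raddf_sum (mderiv j)) raddf_sum mxE.
by apply: eq_bigr => l _; rewrite /= mderivZ mevalZ eval_mderivXU !mxE.
Qed.

Section ReducedBasis.
Variables (d : nat) (W : 'M[R]_(d, n)).
Hypothesis W_ker : W *m (stoich_mx R src tgt)^T = 0.
Local Notation Wc := (map_mx (@mpolyC m R) W).

(* An outflow reaction [S_j -> 0] has reaction vector [-e_j]. *)
Lemma ker_stoich_outflow_eq0 k j : ~~ in_open src tgt j -> W k j = 0.
Proof.
move/negPn/existsP => [r /andP[/eqP src_r /eqP tgt_r]].
have : (W *m (stoich_mx R src tgt)^T) k r = 0 by rewrite W_ker mxE.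
rewrite mxE (bigD1 j) //= big1 => [|l ne_lj]; rewrite !mxE src_r tgt_r mnm0E mnm1E.
  by rewrite eqxx sub0r addr0 mulrN1 => /eqP; rewrite oppr_eq0 => /eqP.
by rewrite eq_sym (negbTE ne_lj) subrr mulr0.
Qed.

Lemma mul_ker_jac_grate : Wc *m Jg = - Wc.
Proof.
rewrite jac_grate mulmxBr jac_frate mulmxA map_trmx -map_mxM W_ker map_mx0.
rewrite mul0mx sub0r; congr (- _); apply/matrixP => k j; rewrite mul_mx_diag !mxE.
by case: (boolP (in_open src tgt j)) => [_|/ker_stoich_outflow_eq0 ->];
  rewrite ?mulr1 ?rmorph0 ?mul0r.
Qed.

Hypothesis W_reduced :
  forall (k : 'I_d) (j : 'I_n), (j < d)%N -> W k j = (k == j :> nat)%:R.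
Hypothesis le_dn : (d <= n)%N.

Lemma pihomog_det_jac_grate :
  pihomog mdeg (\sum_(i < n) (d <= i : nat)) ((-1) ^+ d * \det Jg) =
  \det (jac (ext_rate src tgt W) c).
Proof.
have -> : \det Jg = \det (overlay_top Wc 1%:M *m Jg).
  rewrite det_mulmx det_overlay_top1 ?mul1r // => k j lt_jd.
  by rewrite mxE W_reduced // rmorph_nat.
rewrite mul_overlay_top1 mul_ker_jac_grate det_overlay_topN // mulrA -expr2.
rewrite sqrr_sign mul1r jac_grate -[Wc]addr0 overlay_topD jac_ext_rate.
apply: pihomog_detD => i j; rewrite mxE; case: insubP => [k lt_id _|ge_id].
- by rewrite leqNgt lt_id mxE mpolyC_dhomog0.
- by rewrite leqNgt ge_id jac_frate_dhomog1.
- by rewrite mxE msize0.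
rewrite -leqNgt in ge_id; rewrite ge_id !mxE msizeN; apply: msize_dhomog.
by rewrite rpredMn // rpredMn // dhomog1.
Qed.

End ReducedBasis.

End JacobianStructure.

Theorem corollary7p2 (R : realFieldType) (n m d : nat)
    (src tgt : 'I_m -> 'X_{1..n}) (W : 'M[R]_(d, n)) :
  (forall r : 'I_m, src r != tgt r) ->
  injective (fun r : 'I_m => (src r, tgt r)) ->
  (\rank (stoich_mx R src tgt) < n)%N ->
  row_free W ->
  (W == kermx (stoich_mx R src tgt)^T)%MS ->
  (forall (k : 'I_d) (j : 'I_n), (j < d)%N -> W k j = (k == j :> nat)%:R) ->
  forall c : 'I_n -> R,
    \det (jac (ext_rate src tgt W) c) =
    deg_part (\rank (stoich_mx R src tgt))
      ((-1) ^+ d * \det (jac (grate R src tgt) c)).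
Proof.
move=> _ _ _ W_free W_basis W_reduced c.
have W_ker : W *m (stoich_mx R src tgt)^T = 0.
  by apply/sub_kermxP; case/andP: W_basis.
have d_eq : d = (n - \rank (stoich_mx R src tgt))%N.
  by rewrite -(eqP W_free) (eqmx_rank W_basis) mxrank_ker mxrank_tr.
have le_dn : (d <= n)%N by rewrite d_eq leq_subr.
have -> : \rank (stoich_mx R src tgt) = (\sum_(i < n) (d <= i : nat))%N.
  by rewrite sum_ord_geq d_eq subKn // rank_leq_col.
by rewrite /deg_part (pihomog_det_jac_grate c W_ker W_reduced le_dn).
Qed.
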